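(* Let $N\ge 2$, $K\ge 2$ be integers, $d_m=N-1$ for $m\in[1:N]$ and $d_m=N$ for $m\in[N+1:N^K]$, $C=\left(\sum_{k=0}^{K-1}N^{-k}\right)^{-1}$, and $1\le D\le 1/C$. Let $\mathcal{F}_D$ be the set of probability vectors $P$ on $[1:N^K]$ with $\frac{1}{N-1}\sum_{m=1}^{N^K}p_md_m=D$, and $U$ the uniform distribution on $[1:N^K]$. Then the minimum $\rho_\alpha:=\min_{P\in\mathcal{F}_D}D_\alpha(P\|U)$ equals, for $0<\alpha<\infty$, $\alpha\ne1$, $$\rho_\alpha=\frac{1}{\alpha-1}\log\left[N\left(\frac{1-(N-1)(D-1)}{N}\right)^{\alpha}+(N^K-N)\left(\frac{(N-1)(D-1)}{N^K-N}\right)^{\alpha}\right]+\log N^K;$$ for $\alpha=1$, $$\rho_1=\{1-(N-1)(D-1)\}\log\frac{1-(N-1)(D-1)}{N}+(N-1)(D-1)\log\frac{(N-1)(D-1)}{N^K-N}+\log N^K;$$ and for $\alpha=\infty$, $$\rho_\infty=\log\frac{1-(N-1)(D-1)}{N}+\log N^K.$$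
   Context: Notation: $[i:j]=\{i,\dots,j\}$; logarithms are natural, with $0\log0=0$. Rényi divergence for probability vectors $P,U$ on $[1:M]$ with $u_m>0$: $D_\alpha(P\|U)=\frac{1}{\alpha-1}\log\sum_m p_m^\alpha u_m^{1-\alpha}$ for $0<\alpha<\infty,\alpha\ne1$; $D_1(P\|U)=\sum_m p_m\log\frac{p_m}{u_m}$; $D_\infty(P\|U)=\log\max_m\frac{p_m}{u_m}$. (Interpretation: optimal tradeoff between information leakage and normalized expected download cost $D$ for the symmetric Tian–Sun–Chen PIR scheme with $N$ databases, $K$ messages, message length $N-1$.) *)

From mathcomp Require Import all_boot all_order all_algebra.
From mathcomp Require Import all_classical all_reals all_analysis.
Set Implicit Arguments. Unset Strict Implicit. Unset Printing Implicit Defensive.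
Import Order.TTheory GRing.Theory Num.Theory.
Local Open Scope ring_scope.

Section Renyi.
Variable R : realType.
Variable M : nat.

(* probability vectors on [1:M], indexed by 'I_M (index m <-> m+1) *)
Definition prob_vec (P : 'I_M -> R) : Prop :=
  (forall m, 0 <= P m) /\ \sum_(m < M) P m = 1.

(* Renyi divergence of order alpha, 0 < alpha < oo, alpha <> 1;
   note 0 `^ alpha = 0 for alpha <> 0 (powR) *)
Definition renyi (alpha : R) (P U : 'I_M -> R) : R :=
  (alpha - 1)^-1 * ln (\sum_(m < M) P m `^ alpha * U m `^ (1 - alpha)).

(* order 1: KL divergence; the 0 log 0 = 0 convention holds via the factor P m *)
Definition renyi1 (P U : 'I_M -> R) : R :=
  \sum_(m < M) P m * ln (P m / U m).

(* order oo: log max_m p_m/u_m (all ratios are nonnegative, so 0 is a neutral seed) *)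
Definition renyi_inf (P U : 'I_M -> R) : R :=
  ln (\big[Num.max/0]_(m < M) (P m / U m)).

End Renyi.

Definition is_min_over (T : Type) (R : realType) (S : T -> Prop) (f : T -> R) (v : R) : Prop :=
  (exists x, S x /\ f x = v) /\ (forall x, S x -> v <= f x).

(* download costs: d_m = N-1 for m in [1:N], N for m in [N+1:N^K];
   0-based index m : 'I_(N^K) *)
Definition dcost (N K : nat) (m : 'I_(N ^ K)) : nat :=
  if (m < N)%N then N.-1 else N.

Definition uniform (R : realType) (M : nat) : 'I_M -> R := fun _ => (M%:R)^-1.

Definition FD (R : realType) (N K : nat) (D : R) (P : 'I_(N ^ K) -> R) : Prop :=
  prob_vec P /\ (N.-1%:R)^-1 * \sum_(m < (N ^ K)%N) P m * (@dcost N K m)%:R = D.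

Definition Ccost (R : realType) (N K : nat) : R :=
  (\sum_(k < K) (N%:R)^-k)^-1.

(* Split the messages [1:N^K] into block 1, the N messages of download cost
   N - 1, and block 2, the N^K - N messages of cost N.  Normalisation and the
   cost constraint of F_D fix the two block masses to a = 1 - (N-1)(D-1) and
   b = (N-1)(D-1) (FD_block_masses); the rate bound D <= 1/C is equivalent to
   a >= N/N^K (a_NK_ge_N), i.e. the cheap block keeps at least its uniform
   share.  Against the uniform law each divergence is ln N^K plus a functional
   of P alone (section UniformReference).  For orders alpha < oo this
   functional is a monotone function of a separable sum of x^alpha or x ln x;
   by Jensen's inequality on each block (section BlockJensen, proved from the
   tangent-line inequalities of section Tangents) it is extremal at the
   block-uniform vector Pstar, which lies in F_D.  For alpha = oo, averaging
   shows that every P in F_D puts at least a/N on some cheap message, while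
   Pstar attains exactly this maximum since b/(N^K - N) <= a/N. *)

From mathcomp Require Import all_boot all_order all_algebra.
From mathcomp Require Import all_classical all_reals all_analysis.
From mathcomp.algebra_tactics Require Import ring lra.
Import Order.TTheory GRing.Theory Num.Theory.
Local Open Scope ring_scope.

Section Tangents.
Context {R : realType}.

(* For alpha > 1, x |-> x^alpha is convex: it lies above its tangent at c > 0.
   This is Young's inequality x * c^(alpha-1) <= x^alpha/alpha + c^alpha/(alpha/(alpha-1)). *)
Lemma powR_tangent_below (al c x : R) : 1 < al -> 0 < c -> 0 <= x ->
  c `^ al + al * c `^ (al - 1) * (x - c) <= x `^ al.
Proof.
move=> al_gt1 c_gt0 x_ge0.
have al_gt0 : 0 < al by lra.
have al1_gt0 : 0 < al - 1 by lra.
have cu : c * c `^ (al - 1) = c `^ al by rewrite mulr_powRB1 // ltW.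
have young := @conjugate_powR R x (c `^ (al - 1)) al (al / (al - 1)) x_ge0
  (powR_ge0 _ _) al_gt0 (divr_gt0 al_gt0 al1_gt0).
have expo : (al - 1) * (al / (al - 1)) = al by rewrite mulrC divfK ?gt_eqF.
rewrite -powRrM expo in young.
have conj_exp : al^-1 + (al / (al - 1))^-1 = 1.
  by rewrite invf_div; field; rewrite gt_eqF.
have {}young := young conj_exp.
have scaled : al * (x * c `^ (al - 1)) <= x `^ al + (al - 1) * c `^ al.
  have := young; rewrite -(ler_pM2l al_gt0) => /le_trans; apply.
  by rewrite le_eqVlt; apply/orP; left; apply/eqP; field; rewrite !gt_eqF.
rewrite -cu in scaled *.
have -> : c * c `^ (al - 1) + al * c `^ (al - 1) * (x - c)
        = al * (x * c `^ (al - 1)) - (al - 1) * (c * c `^ (al - 1)) by ring.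
by rewrite lerBlDr.
Qed.

(* For 0 < alpha < 1, x |-> x^alpha is concave: it lies below its tangent at c > 0.
   This is the weighted AM-GM inequality x^alpha c^(1-alpha) <= alpha x + (1-alpha) c. *)
Lemma powR_tangent_above (al c x : R) : 0 < al -> al < 1 -> 0 < c -> 0 <= x ->
  x `^ al <= c `^ al + al * c `^ (al - 1) * (x - c).
Proof.
move=> al_gt0 al_lt1 c_gt0 x_ge0.
have al1_gt0 : 0 < 1 - al by lra.
have amgm : x `^ al * c `^ (1 - al) <= al * x + (1 - al) * c.
  have inv_al_gt0 : 0 < al^-1 by rewrite invr_gt0.
  have inv_al1_gt0 : 0 < (1 - al)^-1 by rewrite invr_gt0.
  have := @conjugate_powR R (x `^ al) (c `^ (1 - al)) al^-1 (1 - al)^-1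
    (powR_ge0 _ _) (powR_ge0 _ _) inv_al_gt0 inv_al1_gt0.
  rewrite !invrK -!powRrM !divff ?gt_eqF // (powRr1 x_ge0) (powRr1 (ltW c_gt0)).
  by rewrite (mulrC al) (mulrC (1 - al)); apply; lra.
have cu : c * c `^ (al - 1) = c `^ al by rewrite mulr_powRB1 // ltW.
have inv : c `^ (1 - al) * c `^ (al - 1) = 1.
  have -> : 1 - al = - (al - 1) by ring.
  by rewrite powRN mulVf // gt_eqF // powR_gt0.
have u_gt0 : 0 < c `^ (al - 1) by exact: powR_gt0.
have scaled : x `^ al <= (al * x + (1 - al) * c) * c `^ (al - 1).
  by have := ler_wpM2r (ltW u_gt0) amgm; rewrite -mulrA inv mulr1.
rewrite -cu.
have -> : c * c `^ (al - 1) + al * c `^ (al - 1) * (x - c)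
        = (al * x + (1 - al) * c) * c `^ (al - 1) by ring.
exact: scaled.
Qed.

(* x |-> x ln x is convex: it lies above its tangent at c > 0 (from ln t <= t - 1). *)
Lemma xlnx_tangent_below (c x : R) : 0 < c -> 0 <= x ->
  c * ln c + (ln c + 1) * (x - c) <= x * ln x.
Proof.
move=> c_gt0 x_ge0.
have -> : c * ln c + (ln c + 1) * (x - c) = x * ln c + x - c by ring.
have [->|x_neq0] := eqVneq x 0; first by rewrite !mul0r; lra.
have x_gt0 : 0 < x by rewrite lt_def x_neq0 x_ge0.
have := @le_ln1Dx R (c / x - 1) ltac:(have := divr_gt0 c_gt0 x_gt0; lra).
rewrite addrC subrK ln_div ?posrE // -(ler_pM2l x_gt0) !mulrBr mulr1.
by rewrite [x * (c / x)]mulrC divfK ?gt_eqF //; lra.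
Qed.

End Tangents.

Section BlockJensen.
Context {R : realType} {I : finType} {B : pred I} {n : R} {x : I -> R}.
Hypothesis count_B : \sum_(i | B i) (1 : R) = n.
Hypothesis n_gt0 : 0 < n.
Hypothesis x_ge0 : forall i, 0 <= x i.

Let S := \sum_(i | B i) x i.
Let c := S / n.

Lemma sum_block_cst (k : R) : \sum_(i | B i) k = n * k.
Proof. by rewrite -count_B big_distrl /=; apply: eq_bigr => i _; rewrite mul1r. Qed.

(* Deviations from the block mean sum to zero, so every affine function of
   x sums to n times its value at the mean. *)
Lemma sum_block_affine (u v : R) : \sum_(i | B i) (u + v * (x i - c)) = n * u.
Proof.
rewrite big_split /= -mulr_sumr sumrB /= !sum_block_cst -/S /c.
by rewrite mulrCA divff ?gt_eqF // mulr1 subrr mulr0 addr0.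
Qed.

Lemma block_mean_cases : (c = 0 /\ forall i, B i -> x i = 0) \/ 0 < c.
Proof.
have S_ge0 : 0 <= S by exact: sumr_ge0.
have [S0|S_neq0] := eqVneq S 0.
  by left; rewrite /c S0 mul0r; split => //; exact: psumr_eq0P S0.
by right; rewrite divr_gt0 // lt_def S_neq0 S_ge0.
Qed.

Lemma block_powR_gt1 (al : R) : 1 < al -> n * c `^ al <= \sum_(i | B i) x i `^ al.
Proof.
move=> al_gt1; have [[-> _]|c_gt0] := block_mean_cases.
  rewrite powR0 ?mulr0 ?gt_eqF //; last lra.
  by apply: sumr_ge0 => i _; exact: powR_ge0.
rewrite -(sum_block_affine (c `^ al) (al * c `^ (al - 1))).
by apply: ler_sum => i _; exact: powR_tangent_below.
Qed.

Lemma block_powR_lt1 (al : R) : 0 < al -> al < 1 ->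
  \sum_(i | B i) x i `^ al <= n * c `^ al.
Proof.
move=> al_gt0 al_lt1; have [[-> x0]|c_gt0] := block_mean_cases.
  by rewrite big1 ?powR0 ?mulr0 ?gt_eqF // => i /x0 ->; rewrite powR0 ?gt_eqF.
rewrite -(sum_block_affine (c `^ al) (al * c `^ (al - 1))).
by apply: ler_sum => i _; exact: powR_tangent_above.
Qed.

Lemma block_xlnx : S * ln c <= \sum_(i | B i) x i * ln (x i).
Proof.
have [[-> x0]|c_gt0] := block_mean_cases.
  by rewrite ln0 // mulr0 big1 // => i /x0 ->; rewrite mul0r.
have mean_mass : n * c = S by rewrite /c mulrCA divff ?gt_eqF ?mulr1.
rewrite -{1}mean_mass -mulrA.
rewrite -(sum_block_affine (c * ln c) (ln c + 1)).
by apply: ler_sum => i _; exact: xlnx_tangent_below.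
Qed.

End BlockJensen.

Section UniformReference.
Context {R : realType} {M : nat}.
Hypothesis M_gt0 : (0 < M)%N.

Lemma renyi_uniformE (al : R) (P : 'I_M -> R) :
  al != 1 -> 0 < \sum_(m < M) P m `^ al ->
  renyi al P (@uniform R M) = (al - 1)^-1 * ln (\sum_(m < M) P m `^ al) + ln M%:R.
Proof.
move=> al_neq1 sum_gt0.
have Minv_gt0 : 0 < (M%:R : R)^-1 by rewrite invr_gt0 ltr0n.
rewrite /renyi /uniform -big_distrl /= lnM ?posrE ?powR_gt0 // ln_powR lnV ?posrE ?ltr0n //.
by field; rewrite subr_eq0.
Qed.

Lemma renyi1_uniformE (P : 'I_M -> R) : prob_vec P ->
  renyi1 P (@uniform R M) = \sum_(m < M) P m * ln (P m) + ln M%:R.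
Proof.
move=> [P_ge0 P_sum1]; rewrite /renyi1 /uniform.
transitivity (\sum_(m < M) (P m * ln (P m) + P m * ln M%:R)).
  apply: eq_bigr => m _; have [->|Pm_neq0] := eqVneq (P m) 0; first by rewrite !mul0r addr0.
  have Pm_gt0 : 0 < P m by rewrite lt_def Pm_neq0 P_ge0.
  by rewrite invrK lnM ?posrE ?ltr0n // mulrDr.
by rewrite big_split /= -big_distrl /= P_sum1 mul1r.
Qed.

Lemma renyi_inf_uniformE (P : 'I_M -> R) :
  renyi_inf P (@uniform R M) = ln (\big[Num.max/0]_(m < M) (P m * M%:R)).
Proof. by rewrite /renyi_inf /uniform; congr ln; apply: eq_bigr => m _; rewrite invrK. Qed.

End UniformReference.

(* The reciprocal of the rate bound in closed form: with y = 1/x,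
   (x - 1) * (1 + y + ... + y^(K-1)) = x - x * y^K. *)
Lemma geometric_sum_inv (R : realType) (x : R) (K : nat) : x != 0 ->
  (x - 1) * \sum_(k < K) x^-1 ^+ k = x - x * x^-1 ^+ K.
Proof.
move=> x_neq0.
have -> : x - x * x^-1 ^+ K = - x * (x^-1 ^+ K - 1) by ring.
by rewrite subrX1; field.
Qed.

Section CostStructure.
Context {R : realType} {N K : nat} {D : R}.
Hypotheses (hN : (2 <= N)%N) (hK : (2 <= K)%N).
Hypotheses (hD1 : 1 <= D) (hD2 : D <= (Ccost R N K)^-1).

(* The mass the constraint forces on the N cheap messages, and on the others. *)
Local Notation a := (1 - (N%:R - 1) * (D - 1) : R).
Local Notation b := ((N%:R - 1) * (D - 1) : R).
Local Notation NK := ((N ^ K)%N%:R : R).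

Local Notation block1 := (fun m : 'I_(N ^ K) => (m < N)%N).
Local Notation block2 := (fun m : 'I_(N ^ K) => ~~ (m < N)%N).

Lemma Nr_gt1 : 1 < (N%:R : R).
Proof. by rewrite ltr1n. Qed.

Lemma N_lt_NK : (N < N ^ K)%N.
Proof. by rewrite -{1}(expn1 N) ltn_exp2l. Qed.

Lemma NK_gt_N : (N%:R : R) < NK.
Proof. by rewrite ltr_nat N_lt_NK. Qed.

Lemma N_gt0 : (0 : R) < N%:R.
Proof. by have := Nr_gt1; lra. Qed.

Lemma NK_sub_N_gt0 : (0 : R) < NK - N%:R.
Proof. by have := NK_gt_N; lra. Qed.

Lemma NK_gt0_nat : (0 < N ^ K)%N.
Proof. by rewrite expn_gt0 (leq_trans _ hN). Qed.

Lemma NK_gt0 : (0 : R) < NK.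
Proof. by rewrite ltr0n NK_gt0_nat. Qed.

Lemma block1_first : (Ordinal NK_gt0_nat < N)%N.
Proof. by rewrite /= (leq_trans _ hN). Qed.

Lemma N_sub1_neq0 : (N%:R : R) - 1 != 0.
Proof. by rewrite subr_eq0 gt_eqF ?Nr_gt1. Qed.

Lemma card_block1 : \sum_(m < N ^ K | block1 m) (1 : R) = N%:R.
Proof. by rewrite (big_ord_narrow (ltnW N_lt_NK)) sumr_const card_ord. Qed.

Lemma card_block2 : \sum_(m < N ^ K | block2 m) (1 : R) = NK - N%:R.
Proof.
have total : \sum_(m < N ^ K) (1 : R) = NK by rewrite sumr_const card_ord.
by move: total; rewrite (bigID block1) /= card_block1 => <-; ring.
Qed.

Lemma predN_nat : (N.-1%:R : R) = N%:R - 1.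
Proof. by rewrite -subn1 natrB // (leq_trans _ hN). Qed.

Lemma cost_by_blocks (P : 'I_(N ^ K) -> R) :
  \sum_(m < N ^ K) P m * (dcost m)%:R =
  (N%:R - 1) * \sum_(m < N ^ K | block1 m) P m + N%:R * \sum_(m < N ^ K | block2 m) P m.
Proof.
rewrite (bigID block1) /= !mulr_sumr; congr (_ + _); apply: eq_bigr => m Hm.
  by rewrite /dcost Hm predN_nat mulrC.
by rewrite /dcost (negbTE Hm) mulrC.
Qed.

Lemma FD_block_masses (P : 'I_(N ^ K) -> R) : FD D P ->
  \sum_(m < N ^ K | block1 m) P m = a /\ \sum_(m < N ^ K | block2 m) P m = b.
Proof.
move=> [[_ total] cost]; rewrite (bigID block1) /= in total.
rewrite cost_by_blocks predN_nat in cost.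
have {}cost : (N%:R - 1) * \sum_(m < N ^ K | block1 m) P m
    + N%:R * \sum_(m < N ^ K | block2 m) P m = (N%:R - 1) * D.
  by rewrite -cost mulrA mulfV ?N_sub1_neq0 // mul1r.
split; nra.
Qed.

(* The rate bound D <= 1/C says exactly that the cheap block keeps at least
   the uniform share N/N^K of the mass; this is where it is used. *)
Lemma a_NK_ge_N : (N%:R : R) <= a * NK.
Proof.
have yK : (N%:R)^-1 ^+ K * NK = 1 by rewrite exprVn natrX mulVf // expf_neq0 // gt_eqF // N_gt0.
have rate : (N%:R - 1) * D <= N%:R - N%:R * (N%:R)^-1 ^+ K.
  rewrite -geometric_sum_inv ?gt_eqF ?N_gt0 // ler_pM2l ?subr_gt0 ?Nr_gt1 //.
  under eq_bigr do rewrite exprVn.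
  by move: hD2; rewrite /Ccost invrK.
have : N%:R * (N%:R)^-1 ^+ K <= a by lra.
by rewrite -(ler_pM2r NK_gt0) -mulrA yK mulr1.
Qed.

Lemma a_gt0 : 0 < a.
Proof.
by rewrite -(pmulr_lgt0 _ NK_gt0); exact: lt_le_trans N_gt0 a_NK_ge_N.
Qed.

Lemma b_ge0 : 0 <= b.
Proof. by apply: mulr_ge0; [have := Nr_gt1 | have := hD1]; lra. Qed.

Lemma block2_mean_le : b / (NK - N%:R) <= a / N%:R.
Proof.
rewrite (ler_pdivrMr _ _ NK_sub_N_gt0) mulrAC (ler_pdivlMr _ _ N_gt0).
by have := a_NK_ge_N; lra.
Qed.

(* The minimiser: uniform inside each block, with the prescribed block masses. *)
Definition Pstar (m : 'I_(N ^ K)) : R :=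
  if (m < N)%N then a / N%:R else b / (NK - N%:R).

Lemma Pstar_ge0 (m : 'I_(N ^ K)) : 0 <= Pstar m.
Proof.
rewrite /Pstar; case: ifP => _.
  exact: divr_ge0 (ltW a_gt0) (ltW N_gt0).
exact: divr_ge0 b_ge0 (ltW NK_sub_N_gt0).
Qed.

Lemma sum_Pstar_blocks (f : R -> R) :
  \sum_(m < N ^ K | block1 m) f (Pstar m) = N%:R * f (a / N%:R) /\
  \sum_(m < N ^ K | block2 m) f (Pstar m) = (NK - N%:R) * f (b / (NK - N%:R)).
Proof.
split.
  rewrite (eq_bigr (fun=> f (a / N%:R))) => [|m Hm]; last by rewrite /Pstar Hm.
  exact: (sum_block_cst card_block1).
rewrite (eq_bigr (fun=> f (b / (NK - N%:R)))) => [|m Hm]; last by rewrite /Pstar (negbTE Hm).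
exact: (sum_block_cst card_block2).
Qed.

Lemma sum_Pstar (f : R -> R) :
  \sum_(m < N ^ K) f (Pstar m) = N%:R * f (a / N%:R) + (NK - N%:R) * f (b / (NK - N%:R)).
Proof. by have [s1 s2] := sum_Pstar_blocks f; rewrite (bigID block1) /= s1 s2. Qed.

Lemma FD_Pstar : FD D Pstar.
Proof.
have [m1 m2] := sum_Pstar_blocks id.
split; first split.
- exact: Pstar_ge0.
- by rewrite (sum_Pstar id) /=; field; rewrite ?(gt_eqF N_gt0) ?(gt_eqF NK_sub_N_gt0).
- by rewrite cost_by_blocks m1 m2 predN_nat; field; rewrite N_sub1_neq0 ?(gt_eqF N_gt0) ?(gt_eqF NK_sub_N_gt0).
Qed.

(* Averaging: some cheap message gets at least the block mean a/N. *)
Lemma FD_block1_large (P : 'I_(N ^ K) -> R) : FD D P ->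
  exists2 m, block1 m & a / N%:R <= P m.
Proof.
move=> HP; have [mass1 _] := FD_block_masses P HP.
apply/exists_inP; apply: contraT => /exists_inPn small.
have : \sum_(m < N ^ K | block1 m) P m < \sum_(m < N ^ K | block1 m) (a / N%:R).
  apply: ltr_sum => [|m /small]; last by rewrite -ltNge.
  by apply/hasP; exists (Ordinal NK_gt0_nat); rewrite ?mem_index_enum ?block1_first.
rewrite mass1 (sum_block_cst card_block1) mulrCA (divff (lt0r_neq0 N_gt0)) mulr1.
by rewrite ltxx.
Qed.

(* Every P in F_D has a positive entry, so the sum inside the logarithm is positive. *)
Lemma FD_sum_powR_gt0 (al : R) (P : 'I_(N ^ K) -> R) : FD D P ->
  0 < \sum_(m < N ^ K) P m `^ al.
Proof.
move=> HP; have [m _ Pm_large] := FD_block1_large P HP.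
have Pm_gt0 : 0 < P m by apply: lt_le_trans Pm_large; exact: divr_gt0 a_gt0 N_gt0.
rewrite (bigD1 m) //= ltr_pwDl ?powR_gt0 //.
by apply: sumr_ge0 => i _; exact: powR_ge0.
Qed.

(* Jensen on each block: the sum of p^alpha over F_D is extremal at Pstar. *)
Lemma FD_sum_powR_extremal (al : R) (P : 'I_(N ^ K) -> R) : FD D P ->
  let X := \sum_(m < N ^ K) P m `^ al in
  let Xstar := \sum_(m < N ^ K) Pstar m `^ al in
  (1 < al -> Xstar <= X) /\ (0 < al -> al < 1 -> X <= Xstar).
Proof.
move=> HP X Xstar; have [mass1 mass2] := FD_block_masses P HP.
have P_ge0 : forall m, 0 <= P m by case: HP => [[]].
have c1 := card_block1; have c2 := card_block2.
rewrite /X /Xstar (sum_Pstar (fun p => p `^ al)) (bigID block1) /=.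
split => [al_gt1 | al_gt0 al_lt1]; apply: lerD.
- by have := block_powR_gt1 c1 N_gt0 P_ge0 al al_gt1; rewrite mass1.
- by have := block_powR_gt1 c2 NK_sub_N_gt0 P_ge0 al al_gt1; rewrite mass2.
- by have := block_powR_lt1 c1 N_gt0 P_ge0 al al_gt0 al_lt1; rewrite mass1.
- by have := block_powR_lt1 c2 NK_sub_N_gt0 P_ge0 al al_gt0 al_lt1; rewrite mass2.
Qed.

Lemma min_renyi (al : R) : 0 < al -> al != 1 ->
  is_min_over (@FD R N K D) (fun P => renyi al P (@uniform R (N ^ K)))
    ((al - 1)^-1 *
       ln (N%:R * (a / N%:R) `^ al + (NK - N%:R) * (b / (NK - N%:R)) `^ al)
     + ln NK).
Proof.
move=> al_gt0 al_neq1.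
have Xs_gt0 := FD_sum_powR_gt0 al Pstar FD_Pstar.
rewrite -(sum_Pstar (fun p => p `^ al)); split.
  exists Pstar; split; first exact: FD_Pstar.
  by rewrite (renyi_uniformE NK_gt0_nat _ _ al_neq1 Xs_gt0).
move=> P HP; have X_gt0 := FD_sum_powR_gt0 al P HP.
rewrite (renyi_uniformE NK_gt0_nat _ _ al_neq1 X_gt0) lerD2r.
have [up down] := FD_sum_powR_extremal al P HP.
case: (ltgtP al 1) => [al_lt1|al_gt1|al_eq1]; last by rewrite al_eq1 eqxx in al_neq1.
- rewrite ler_nM2l ?invr_lt0 ?subr_lt0 // ler_ln ?posrE //.
  exact: down.
- rewrite ler_pM2l ?invr_gt0 ?subr_gt0 // ler_ln ?posrE //.
  exact: up.
Qed.

Lemma min_renyi1 :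
  is_min_over (@FD R N K D) (fun P => renyi1 P (@uniform R (N ^ K)))
    (a * ln (a / N%:R) + b * ln (b / (NK - N%:R)) + ln NK).
Proof.
have [FDs_prob _] := FD_Pstar.
split.
  exists Pstar; split; first exact: FD_Pstar.
  rewrite (renyi1_uniformE NK_gt0_nat _ FDs_prob) (sum_Pstar (fun p => p * ln p)).
  by congr (_ + _); field; rewrite ?(gt_eqF N_gt0) ?(gt_eqF NK_sub_N_gt0).
move=> P HP; have [HP_prob _] := HP; rewrite (renyi1_uniformE NK_gt0_nat _ HP_prob) lerD2r (bigID block1) /=.
have [mass1 mass2] := FD_block_masses P HP.
have P_ge0 : forall m, 0 <= P m by case: HP_prob.
apply: lerD.
- by have := block_xlnx card_block1 N_gt0 P_ge0; rewrite mass1.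
- by have := block_xlnx card_block2 NK_sub_N_gt0 P_ge0; rewrite mass2.
Qed.

Lemma min_renyi_inf :
  is_min_over (@FD R N K D) (fun P => renyi_inf P (@uniform R (N ^ K)))
    (ln (a / N%:R) + ln NK).
Proof.
have aN_gt0 : 0 < a / N%:R by exact: divr_gt0 a_gt0 N_gt0.
have NK_pos := NK_gt0.
have value_gt0 : 0 < a / N%:R * NK by exact: mulr_gt0.
rewrite -lnM ?posrE //; split.
  exists Pstar; split; first exact: FD_Pstar.
  rewrite renyi_inf_uniformE; congr ln; apply/le_anti/andP; split.
    apply: bigmax_le => [|m _]; first exact: ltW.
    rewrite ler_pM2r // /Pstar; case: ifP => _ //.
    exact: block2_mean_le.
  apply: le_trans (le_bigmax _ _ (Ordinal NK_gt0_nat)).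
  by rewrite /Pstar block1_first.
move=> P HP; rewrite renyi_inf_uniformE.
have [m _ Pm_large] := FD_block1_large P HP.
have max_large : a / N%:R * NK <= \big[Num.max/0]_(i < N ^ K) (P i * NK).
  by apply: le_trans (le_bigmax _ _ m); rewrite ler_pM2r.
by rewrite ler_ln ?posrE // (lt_le_trans value_gt0 max_large).
Qed.

End CostStructure.

Theorem theorem1 (R : realType) (N K : nat) (D : R)
  (hN : (2 <= N)%N) (hK : (2 <= K)%N)
  (hD1 : 1 <= D) (hD2 : D <= (Ccost R N K)^-1) :
  let a : R := 1 - (N%:R - 1) * (D - 1) in
  let b : R := (N%:R - 1) * (D - 1) in
  let NK : R := (N ^ K)%N%:R in
  (forall alpha : R, 0 < alpha -> alpha != 1 ->
     is_min_over (@FD R N K D) (fun P => renyi alpha P (@uniform R (N ^ K)%N))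
       ((alpha - 1)^-1 *
          ln (N%:R * (a / N%:R) `^ alpha + (NK - N%:R) * (b / (NK - N%:R)) `^ alpha)
        + ln NK)) /\
  is_min_over (@FD R N K D) (fun P => renyi1 P (@uniform R (N ^ K)%N))
    (a * ln (a / N%:R) + b * ln (b / (NK - N%:R)) + ln NK) /\
  is_min_over (@FD R N K D) (fun P => renyi_inf P (@uniform R (N ^ K)%N))
    (ln (a / N%:R) + ln NK).
Proof.
move=> a b NK; split; last split.
- by move=> al al_gt0 al_neq1; exact: min_renyi.
- exact: min_renyi1.
- exact: min_renyi_inf.
Qed.
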